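(* Let $\Gamma_n = \log\log(d_n+1) - (n-1)$. Then $\Gamma_n>0$ for all $n\ge1$, and $\Gamma_{n+1}<\Gamma_n$ for all $n\ge 2$.
   Context: All logarithms $\log$ are to base $2$. A delta-matroid $(E,\mathcal F)$ consists of a finite ground set $E$ and a non-empty collection $\mathcal F$ of subsets of $E$ (the feasible sets) satisfying the symmetric exchange axiom: for all $X,Y\in\mathcal F$ and every $e\in X\triangle Y$ there exists $f\in X\triangle Y$ (possibly $f=e$) with $X\triangle\{e,f\}\in\mathcal F$. Let $d_n$ denote the number of labelled delta-matroids with ground set $[n]=\{1,\dots,n\}$, i.e. the number of collections $\mathcal F$ of subsets of $[n]$ such that $([n],\mathcal F)$ is a delta-matroid. *)

From mathcomp Require Import all_boot.
From Stdlib Require Import Reals.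

Set Implicit Arguments. Unset Strict Implicit. Unset Printing Implicit Defensive.

Definition symdiff (T : finType) (A B : {set T}) : {set T} := (A :\: B) :|: (B :\: A).

(* ([n], F) is a delta-matroid, with ground set 'I_n = {0,...,n-1} (a relabelling of [n]):
   F is non-empty and satisfies the symmetric exchange axiom. *)
Definition is_delta_matroid (n : nat) (F : {set {set 'I_n}}) : bool :=
  (F != set0) &&
  [forall X in F, forall Y in F, forall e in symdiff X Y,
     exists f in symdiff X Y, symdiff X [set e; f] \in F].

Definition d (n : nat) : nat := #|[set F : {set {set 'I_n}} | is_delta_matroid F]|.

Definition log2 (x : R) : R := (ln x / ln 2)%R.

Definition Gamma (n : nat) : R := (log2 (log2 (INR (d n) + 1)) - (INR n - 1))%R.

(* The even subsets of [n] together with an arbitrary family of odd subsets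
   always form a delta-matroid: from an odd set a single toggle reaches an even
   set, and from an even set X either a second element of X △ Y keeps the
   parity, or X △ Y = {e} and the step reaches Y itself.  There are 2^(2^(n-1))
   such families, which gives Γ_n > 0.
   Conversely a delta-matroid F on [n+1] is determined by its two slices
   {Y | Y ∈ F} and {Y | Y ∪ {n+1} ∈ F}, each empty or a delta-matroid on [n].
   They are not both empty, and for n ≥ 2 they cannot be ({∅}, {[n]}): the
   exchange from ∅ towards [n+1] at n+1 yields a member of F containing n+1
   and at most one other element.  Hence d_(n+1) + 2 ≤ (d_n + 1)^2, and taking
   log log gives Γ_(n+1) < Γ_n. *)

From Stdlib Require Import Reals Lra.
From mathcomp Require Import all_boot zify.
Set Implicit Arguments. Unset Strict Implicit. Unset Printing Implicit Defensive.

Section Symdiff.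
Variable T : finType.
Implicit Types A B X Y : {set T}.

Lemma in_symdiff A B x : (x \in symdiff A B) = (x \in A) (+) (x \in B).
Proof. by rewrite /symdiff !inE; case: (x \in A); case: (x \in B). Qed.

Lemma symdiffK X Y : symdiff X (symdiff X Y) = Y.
Proof. by apply/setP => x; rewrite !in_symdiff addbA addbb. Qed.

Lemma symdiffKr X Y : symdiff (symdiff X Y) Y = X.
Proof. by apply/setP => x; rewrite !in_symdiff -addbA addbb addbF. Qed.

Lemma symdiff0X X : symdiff set0 X = X.
Proof. by apply/setP => x; rewrite in_symdiff inE. Qed.

Lemma odd_card_symdiff A B : odd #|symdiff A B| = odd #|A| (+) odd #|B|.
Proof.
have disjD : (A :\: B) :&: (B :\: A) = set0.
  by apply/setP => x; rewrite !inE; case: (x \in A); case: (x \in B).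
have -> : #|symdiff A B| = #|A :\: B| + #|B :\: A|.
  by rewrite /symdiff cardsU disjD cards0 subn0.
rewrite -[in odd #|A|](cardsID B A) -[in odd #|B|](cardsID A B) setIC !oddD.
by case: (odd _); case: (odd _); case: (odd _).
Qed.

Lemma odd_symdiff2 X e f :
  odd #|symdiff X [set e; f]| = odd #|X| (+) (e == f).
Proof. by rewrite odd_card_symdiff cards2 /=; case: eqP. Qed.

End Symdiff.

Definition exchange_axiom n (F : {set {set 'I_n}}) :=
  forall X Y e, X \in F -> Y \in F -> e \in symdiff X Y ->
  exists2 f, f \in symdiff X Y & symdiff X [set e; f] \in F.

Lemma delta_matroidP n (F : {set {set 'I_n}}) :
  reflect (F != set0 /\ exchange_axiom F) (is_delta_matroid F).
Proof.
apply: (iffP andP) => -[F0 exchF]; split => //.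
  move=> X Y e XF YF eXY.
  have /forall_inP /(_ _ XF) /forall_inP /(_ _ YF) := exchF.
  by move=> /forall_inP /(_ _ eXY) /exists_inP.
apply/forall_inP => X XF; apply/forall_inP => Y YF; apply/forall_inP => e eXY.
by apply/exists_inP; apply: exchF.
Qed.

Lemma delta_matroid_set1 n (S : {set 'I_n}) : is_delta_matroid [set S].
Proof.
apply/delta_matroidP; split; first by apply/set0Pn; exists S; rewrite inE.
by move=> X Y e /set1P -> /set1P ->; rewrite in_symdiff addbb.
Qed.

Definition even_sets n : {set {set 'I_n}} := [set X : {set 'I_n} | ~~ odd #|X|].

Lemma delta_matroid_even_setsU n (G : {set {set 'I_n}}) :
  is_delta_matroid (even_sets n :|: G).
Proof.
apply/delta_matroidP; split.
  by apply/set0Pn; exists set0; rewrite !inE cards0.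
move=> X Y e _ YF eXY; case: (boolP (odd #|X|)) => oddX.
  by exists e; rewrite // !inE odd_symdiff2 eqxx oddX.
case: (set0Pn (symdiff X Y :\ e)) => [[f]|noother].
  rewrite in_setD1 => /andP [fe fXY].
  by exists f; rewrite // !inE odd_symdiff2 eq_sym (negbTE fe) addbF oddX.
(* X is even and X, Y differ only in e, so the step e reaches Y itself. *)
exists e; rewrite // setUid.
suff -> : [set e] = symdiff X Y by rewrite symdiffK.
apply/setP => x; rewrite inE; case: eqP => [->|/eqP xe]; first by rewrite eXY.
by apply/esym/negP => xXY; apply: noother; exists x; rewrite in_setD1 xe.
Qed.

Lemma card_odd_sets m : 2 ^ m <= #|~: even_sets m.+1|.
Proof.
pose flip0 (X : {set 'I_m.+1}) := symdiff X [set ord0].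
have even_le_odd : #|even_sets m.+1| <= #|~: even_sets m.+1|.
  have flip0K : cancel flip0 flip0 by move=> X; apply: symdiffKr.
  rewrite -[#|even_sets _|](card_imset _ (can_inj flip0K)).
  apply/subset_leq_card/subsetP => _ /imsetP [X + ->].
  by rewrite !inE odd_card_symdiff cards1; case: (odd _).
have := cardsC (even_sets m.+1).
rewrite -cardsT -powersetT card_powerset cardsT card_ord expnS; lia.
Qed.

Lemma d_lower m : 2 ^ (2 ^ m) <= d m.+1.
Proof.
set E := even_sets m.+1.
have evenU_inj : {in powerset (~: E) &, injective (setU E)}.
  have evenUK (G : {set {set 'I_m.+1}}) : G \subset ~: E -> (E :|: G) :\: E = G.
    move=> Godd; rewrite setDUl setDv set0U; apply/setDidPl.
    by rewrite -[E]setCK -subsets_disjoint.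
  move=> G1 G2; rewrite !inE => G1odd G2odd eqU.
  by rewrite -(evenUK _ G1odd) -(evenUK _ G2odd) eqU.
rewrite (leq_trans (leq_pexp2l _ (card_odd_sets m))) //.
rewrite -card_powerset -(card_in_imset evenU_inj).
apply/subset_leq_card/subsetP => _ /imsetP [G _ ->].
by rewrite inE delta_matroid_even_setsU.
Qed.

Section Slices.
Variable n : nat.
Implicit Types (F G : {set {set 'I_n.+1}}) (X : {set 'I_n.+1}) (Y : {set 'I_n}).

(* The element [ord_max] of ['I_n.+1] plays the role of the new element n+1. *)
Definition ext Y (b : bool) : {set 'I_n.+1} :=
  [set j | if unlift ord_max j is Some i then i \in Y else b].

Definition res X : {set 'I_n} := [set i | lift ord_max i \in X].

Definition slice F b : {set {set 'I_n}} := [set Y | ext Y b \in F].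

Lemma in_ext_lift Y b i : (lift ord_max i \in ext Y b) = (i \in Y).
Proof. by rewrite inE liftK. Qed.

Lemma in_ext_max Y b : (ord_max \in ext Y b) = b.
Proof. by rewrite inE unlift_none. Qed.

Lemma ext_res X : ext (res X) (ord_max \in X) = X.
Proof.
apply/setP => j; case: (unliftP ord_max j) => [i ->|->].
  by rewrite in_ext_lift inE.
by rewrite in_ext_max.
Qed.

Lemma res_ext Y b : res (ext Y b) = Y.
Proof. by apply/setP => i; rewrite inE in_ext_lift. Qed.

Lemma res_symdiff (X1 X2 : {set 'I_n.+1}) :
  res (symdiff X1 X2) = symdiff (res X1) (res X2).
Proof.
apply/setP => i; rewrite !inE.
by case: (lift ord_max i \in X1); case: (lift ord_max i \in X2).
Qed.

Lemma card_res_set2_max j : #|res [set ord_max; j]| <= 1.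
Proof.
by apply/card_le1_eqP => i k; rewrite !inE !lift_eqF /= => /eqP <- /eqP /lift_inj.
Qed.

Lemma symdiff_ext_lift2 Y b e f :
  symdiff (ext Y b) [set lift ord_max e; lift ord_max f] =
  ext (symdiff Y [set e; f]) b.
Proof.
apply/setP => j; case: (unliftP ord_max j) => [i ->|->].
  by rewrite in_symdiff !in_ext_lift in_symdiff !inE !(inj_eq lift_inj).
by rewrite in_symdiff !in_ext_max !inE !eq_liftF addbF.
Qed.

Lemma in_slice F X : X \in F -> res X \in slice F (ord_max \in X).
Proof. by rewrite inE ext_res. Qed.

Lemma slice_inj F G :
  slice F false = slice G false -> slice F true = slice G true -> F = G.
Proof.
move=> eq0 eq1; apply/setP => X; rewrite -(ext_res X).
case: (ord_max \in X); [move/setP: eq1 | move/setP: eq0].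
  by move=> /(_ (res X)); rewrite !inE.
by move=> /(_ (res X)); rewrite !inE.
Qed.

Lemma delta_matroid_slice F b :
  is_delta_matroid F -> slice F b != set0 -> is_delta_matroid (slice F b).
Proof.
move=> /delta_matroidP [_ exchF] sliceF0; apply/delta_matroidP; split => //.
move=> Y1 Y2 e Y1F Y2F eY; rewrite !inE in Y1F Y2F.
have [|f'] := exchF _ _ (lift ord_max e) Y1F Y2F.
  by rewrite in_symdiff !in_ext_lift -in_symdiff.
case: (unliftP ord_max f') => [f ->|->]; last by rewrite in_symdiff !in_ext_max addbb.
rewrite in_symdiff !in_ext_lift -in_symdiff symdiff_ext_lift2 => fY fF.
by exists f; rewrite // inE.
Qed.

Lemma slice_pair_neq0 F :
  F != set0 -> (slice F false, slice F true) != (set0, set0).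
Proof.
case/set0Pn => X /in_slice XF; apply/eqP => -[slice0 slice1].
by move: XF; case: (ord_max \in X); rewrite ?slice0 ?slice1 inE.
Qed.

(* A delta-matroid containing [ext set0 false] and [ext setT true] must contain a
   set [X] with [ord_max \in X] and at most one other element; so the slice at
   [true] cannot be [[set setT]] once [n >= 2]. *)
Lemma slice_pair_neq_bad F : 1 < n -> is_delta_matroid F ->
  (slice F false, slice F true) != ([set set0], [set setT]).
Proof.
move=> n_gt1 /delta_matroidP [_ exchF]; apply/negP => /eqP [slice0 slice1].
have in_F Y b : slice F b = [set Y] -> ext Y b \in F.
  by move/setP/(_ Y); rewrite !inE eqxx => ->.
have [|f _] := exchF _ _ ord_max (in_F _ _ slice0) (in_F _ _ slice1).
  by rewrite in_symdiff !in_ext_max.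
set X := symdiff _ _ => /in_slice.
have -> : ord_max \in X by rewrite in_symdiff in_ext_max !inE eqxx.
rewrite slice1 inE res_symdiff res_ext symdiff0X => /eqP full.
by have := card_res_set2_max f; rewrite full cardsT card_ord leqNgt n_gt1.
Qed.

End Slices.

Definition delta_matroids n : {set {set {set 'I_n}}} :=
  [set F | is_delta_matroid F].

Lemma d_succ_upper n : 1 < n -> d n.+1 + 2 <= (d n).+1 ^ 2.
Proof.
move=> n_gt1.
pose D0 := set0 |: delta_matroids n.
have card_D0 : #|D0| = (d n).+1.
  by rewrite cardsU1 inE /is_delta_matroid eqxx.
have slice_in_D0 F b : is_delta_matroid F -> slice F b \in D0.
  by move=> dmF; rewrite !inE; case: eqP => //= /eqP /(delta_matroid_slice dmF).
pose bad : {set {set 'I_n}} * {set {set 'I_n}} := ([set set0], [set setT]).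
pose target := setX D0 D0 :\ (set0, set0) :\ bad.
have card_target : #|target| + 2 = #|D0| ^ 2.
  have bad_in : bad \in setX D0 D0 :\ (set0, set0).
    rewrite !inE !delta_matroid_set1 !orbT !andbT.
    by apply/eqP => -[/setP /(_ set0)]; rewrite !inE eqxx.
  rewrite -mulnn -cardsX (cardsD1 (set0, set0) (setX D0 D0)).
  rewrite (cardsD1 bad (setX D0 D0 :\ (set0, set0))) bad_in !inE eqxx.
  by rewrite addnC.
rewrite -card_D0 -card_target leq_add2r.
pose slices (F : {set {set 'I_n.+1}}) := (slice F false, slice F true).
have slices_inj : {in delta_matroids n.+1 &, injective slices}.
  by move=> F G _ _ [eq0 eq1]; apply: slice_inj.
rewrite /d -/(delta_matroids _) -(card_in_imset slices_inj).
apply/subset_leq_card/subsetP => _ /imsetP [F + ->]; rewrite inE => dmF.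
rewrite !in_setD1 in_setX !slice_in_D0 // slice_pair_neq_bad //.
by rewrite slice_pair_neq0 //; case/andP: dmF.
Qed.

Lemma d_gt0 m : 0 < d m.+1.
Proof. by apply: leq_trans (d_lower m); rewrite expn_gt0. Qed.

Open Scope R_scope.

Lemma INR_exp2n k : INR (expn 2 k) = 2 ^ k.
Proof. by elim: k => [|k IHk] //; rewrite expnS -multE mult_INR IHk. Qed.

Lemma ln2_gt0 : 0 < ln 2.
Proof. have := ln_lt_2; lra. Qed.

Lemma log2_lt_log2 x y : 0 < x -> x < y -> log2 x < log2 y.
Proof.
move=> x_gt0 lt_xy; apply: Rmult_lt_compat_r.
  exact/Rinv_0_lt_compat/ln2_gt0.
exact: ln_increasing.
Qed.

Lemma log2_pow2 k : log2 (2 ^ k) = INR k.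
Proof. by rewrite /log2 ln_pow; [have := ln2_gt0 => ?; field; lra | lra]. Qed.

Lemma log2_mul2 x : 0 < x -> log2 (2 * x) = 1 + log2 x.
Proof.
move=> x_gt0; rewrite /log2 ln_mult; [|lra|lra].
by have := ln2_gt0 => ?; field; lra.
Qed.

Lemma log2_sqr x : 0 < x -> log2 (x ^ 2) = 2 * log2 x.
Proof. by move=> x_gt0; rewrite /log2 ln_pow //=; lra. Qed.

Lemma log2_gt0 x : 1 < x -> 0 < log2 x.
Proof.
by move=> x_gt1; rewrite -[0](log2_pow2 0); apply: log2_lt_log2 => /=; lra.
Qed.

Lemma lt_log2 k x : 2 ^ k < x -> INR k < log2 x.
Proof.
by move=> lt_x; rewrite -log2_pow2; apply: log2_lt_log2 => //; apply: pow_lt; lra.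
Qed.

Lemma lt_log2_log2 m x : 2 ^ expn 2 m < x -> INR m < log2 (log2 x).
Proof.
by move=> lt_x; apply: lt_log2; rewrite -INR_exp2n; apply: lt_log2.
Qed.

Lemma log2_log2_lt_succ x y :
  1 < x -> 1 < y -> x < y ^ 2 -> log2 (log2 x) < 1 + log2 (log2 y).
Proof.
move=> x_gt1 y_gt1 lt_xy2; rewrite -log2_mul2; last exact: log2_gt0.
apply: log2_lt_log2; first exact: log2_gt0.
by rewrite -log2_sqr; [apply: log2_lt_log2 => //; lra | lra].
Qed.

Theorem theorem3p5 :
  (forall n : nat, (1 <= n)%coq_nat -> (0 < Gamma n)%R) /\
  (forall n : nat, (2 <= n)%coq_nat -> (Gamma (S n) < Gamma n)%R).
Proof.
split=> [[|m] /leP // _ | [|n] /leP // n_gt1].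
  have lt_d : 2 ^ expn 2 m < INR (d m.+1) + 1.
    by have /leP/le_INR := d_lower m; rewrite INR_exp2n; lra.
  by have := lt_log2_log2 lt_d; rewrite /Gamma S_INR; lra.
have dn_gt0 : 0 < INR (d n.+1) by apply/lt_0_INR/ltP/d_gt0.
have dSn_gt0 : 0 < INR (d n.+2) by apply/lt_0_INR/ltP/d_gt0.
have lt_dsq : INR (d n.+2) + 1 < (INR (d n.+1) + 1) ^ 2.
  have /leP/le_INR := d_succ_upper n_gt1.
  by rewrite -mulnn -plusE -multE plus_INR mult_INR !S_INR; simpl INR; lra.
have := log2_log2_lt_succ _ _ lt_dsq.
by rewrite /Gamma S_INR; lra.
Qed.
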